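(* Let $\Gamma$ be a finitely generated group, let $G$ be a finite group with subgroups $G_1, G_2$, and let $\varphi \colon \Gamma \to G$ be a surjective homomorphism. Suppose that the profinite completions of $\varphi^{-1}(G_1)$ and $\varphi^{-1}(G_2)$ are not isomorphic. Then there exist a finite group $H$, a homomorphism $\psi \colon \Gamma \to H$ and a homomorphism $\theta \colon H \to G$ with $\varphi = \theta \circ \psi$, such that $\theta^{-1}(G_1)$ and $\theta^{-1}(G_2)$ are not isomorphic. *)

From HB Require Import structures.
From mathcomp Require Import all_boot all_fingroup.

Set Implicit Arguments.
Unset Strict Implicit.
Unset Printing Implicit Defensive.

Record Grp := MkGrp {
  gcar :> Type;
  gmul : gcar -> gcar -> gcar;
  gone : gcar;
  ginv : gcar -> gcar;
  gmulA : forall x y z, gmul x (gmul y z) = gmul (gmul x y) z;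
  gmul1 : forall x, gmul gone x = x;
  gmulV : forall x, gmul (ginv x) x = gone
}.

Section AbstractGroups.
Variable Gam : Grp.

Definition is_subgroup (S : Gam -> Prop) : Prop :=
  [/\ S (gone Gam),
      (forall x y, S x -> S y -> S (gmul x y)) &
      (forall x, S x -> S (ginv x))].

Definition generated (X : Gam -> Prop) (x : Gam) : Prop :=
  forall S, is_subgroup S -> (forall g, X g -> S g) -> S x.

Definition fin_generated : Prop :=
  exists (n : nat) (s : nat -> Gam),
    forall x, generated (fun g => exists2 i, i < n & g = s i) x.

Definition fin_index_normal (D N : Gam -> Prop) : Prop :=
  [/\ is_subgroup N,
      (forall x, N x -> D x),
      (forall x n, D x -> N n -> N (gmul (gmul x n) (ginv x))) &
      (exists (k : nat) (r : nat -> Gam),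
          (forall i, i < k -> D (r i)) /\
          (forall x, D x -> exists2 i, i < k & exists2 n, N n & x = gmul (r i) n))].

Definition FINS (D : Gam -> Prop) := {N : Gam -> Prop | fin_index_normal D N}.

Definition lcoset (N : Gam -> Prop) (x : Gam) : Gam -> Prop :=
  fun y => exists2 n, N n & y = gmul x n.

(* The profinite completion of the subgroup D: the inverse limit of the
   finite quotients D/N over the normal subgroups N of finite index in D,
   realised as compatible families N |-> (a coset of N in D). *)
Definition is_compl_elt (D : Gam -> Prop) (c : FINS D -> Gam -> Prop) : Prop :=
  (forall N : FINS D, exists2 x, D x & forall y, c N y <-> lcoset (sval N) x y) /\
  (forall M N : FINS D, (forall y, sval M y -> sval N y) ->
      forall y, c M y -> c N y).

Definition completion (D : Gam -> Prop) :=
  {c : FINS D -> Gam -> Prop | is_compl_elt c}.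

(* the group law of the completion, as a relation: e = c * d *)
Definition compl_prod (D : Gam -> Prop) (c d e : completion D) : Prop :=
  forall (N : FINS D) y,
    sval e N y <-> exists a b, [/\ sval c N a, sval d N b & y = gmul a b].

(* continuity for the inverse-limit topology: basic open sets are
   {d | d_N = c_N} for c in the completion and N in FINS D *)
Definition compl_continuous (D1 D2 : Gam -> Prop)
    (f : completion D1 -> completion D2) : Prop :=
  forall (c : completion D1) (N2 : FINS D2),
    exists N1 : FINS D1, forall d : completion D1,
      (forall y, sval d N1 y <-> sval c N1 y) ->
      (forall y, sval (f d) N2 y <-> sval (f c) N2 y).

Definition compl_isomorphic (D1 D2 : Gam -> Prop) : Prop :=
  exists (f : completion D1 -> completion D2) (g : completion D2 -> completion D1),
    [/\ (forall c, g (f c) = c), (forall c, f (g c) = c),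
        (forall c d e, compl_prod c d e -> compl_prod (f c) (f d) (f e)),
        compl_continuous f & compl_continuous g].

End AbstractGroups.

Definition is_hom (Gam : Grp) (gT : finGroupType) (f : Gam -> gT) : Prop :=
  forall x y, f (gmul x y) = (f x * f y)%g.

(** Argue by contraposition and assume that every factorization of [phi] through a
   finite group has isomorphic preimages of [G1] and [G2].  For a subgroup [D] of
   finite index in [Gam], let [D_n] be the intersection of the normal subgroups of [D]
   of index at most [n]: the [D_n] have finite index (a finitely generated group has
   only finitely many subgroups of bounded index), are cofinal among all normal
   subgroups of finite index, and so the profinite completion of [D] is the inverse
   limit of the finite groups [D / D_n].  Every [D_n] contains the intersection [K] of
   all subgroups of [Gam] of index at most [|G| (n + 1)], and [phi] factors through a
   finite quotient [psi : Gam -> H] with kernel inside [K]; the assumed isomorphism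
   [theta^-1 G1 ~ theta^-1 G2] then induces [D1 / D1_n ~ D2 / D2_n], because
   isomorphisms preserve the intersection of the normal subgroups of index at most [n].
   There are finitely many such isomorphisms at each level and they restrict to lower
   levels, so Koenig's lemma gives a compatible sequence of them, whose inverse limit
   is an isomorphism of the completions, continuous since it is so level-wise. *)

From Pilot Require Import Defs.
From HB Require Import structures.
From mathcomp Require Import all_boot all_fingroup.
From Stdlib Require Import ClassicalEpsilon.
From Stdlib Require Import PropExtensionality FunctionalExtensionality ProofIrrelevance.

Set Implicit Arguments.
Unset Strict Implicit.
Unset Printing Implicit Defensive.

Local Notation "x ** y" := (gmul x y) (at level 40, left associativity).

Section GroupAlgebra.
Variable Gam : Grp.
Implicit Types x y z : Gam.

Lemma gmulgV x : x ** ginv x = gone Gam.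
Proof.
have h : ginv (ginv x) ** ginv x = gone Gam by rewrite gmulV.
by rewrite -[x ** _]gmul1 -{1}h -gmulA (gmulA (ginv x)) gmulV gmul1.
Qed.

Lemma gmulg1 x : x ** gone Gam = x.
Proof. by rewrite -(gmulV x) gmulA gmulgV gmul1. Qed.

Lemma gmulKg x y : ginv x ** (x ** y) = y.
Proof. by rewrite gmulA gmulV gmul1. Qed.

Lemma gmulKVg x y : x ** (ginv x ** y) = y.
Proof. by rewrite gmulA gmulgV gmul1. Qed.

Lemma gmulgI x y z : x ** y = x ** z -> y = z.
Proof. by move=> e; rewrite -(gmulKg x y) e gmulKg. Qed.

Lemma ginvgK x : ginv (ginv x) = x.
Proof. by apply: (@gmulgI (ginv x)); rewrite gmulgV gmulV. Qed.

Lemma ginvMg x y : ginv (x ** y) = ginv y ** ginv x.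
Proof. by apply: (@gmulgI (x ** y)); rewrite gmulgV -gmulA gmulKVg gmulgV. Qed.

Lemma ginvg1 : ginv (gone Gam) = gone Gam.
Proof. by rewrite -{2}(gmulV (gone Gam)) gmulg1. Qed.

End GroupAlgebra.

Section Subgroups.
Variable Gam : Grp.
Implicit Types (S T D N : Gam -> Prop) (x y z : Gam).

Section Closure.
Variable S : Gam -> Prop.
Hypothesis sS : is_subgroup S.

Lemma subgroup1 : S (gone Gam). Proof. by case: sS. Qed.
Lemma subgroupM x y : S x -> S y -> S (x ** y). Proof. by case: sS => _ + _; apply. Qed.
Lemma subgroupV x : S x -> S (ginv x). Proof. by case: sS => _ _; apply. Qed.

End Closure.

Lemma subgroup_ext S T : (forall z, S z <-> T z) -> is_subgroup S -> is_subgroup T.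
Proof.
move=> eST [S1 SM SV]; split; first exact/eST.
  by move=> x y /eST Sx /eST Sy; apply/eST/SM.
by move=> x /eST Sx; apply/eST/SV.
Qed.

Definition normal_in D N := forall x n, D x -> N n -> N (x ** n ** ginv x).

Definition eqmod S x y := S (ginv x ** y).

Lemma eqmod_refl S x : is_subgroup S -> eqmod S x x.
Proof. by move=> sS; rewrite /eqmod gmulV; apply: subgroup1. Qed.

Lemma eqmod_sym S x y : is_subgroup S -> eqmod S x y -> eqmod S y x.
Proof. by move=> sS /(subgroupV sS); rewrite /eqmod ginvMg ginvgK. Qed.

Lemma eqmod_trans S x y z : is_subgroup S -> eqmod S x y -> eqmod S y z -> eqmod S x z.
Proof. by move=> sS Sxy Syz; have := subgroupM sS Sxy Syz; rewrite -gmulA gmulKVg. Qed.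

Lemma eqmodMl S x y z : eqmod S x y -> eqmod S (z ** x) (z ** y).
Proof. by rewrite /eqmod ginvMg -gmulA gmulKg. Qed.

Lemma eqmodS S T x y : (forall z, S z -> T z) -> eqmod S x y -> eqmod T x y.
Proof. by move=> ST; apply: ST. Qed.

Lemma eqmodM D N x y x' y' : is_subgroup D -> is_subgroup N -> normal_in D N ->
  D x' -> eqmod N x y -> eqmod N x' y' -> eqmod N (x ** x') (y ** y').
Proof.
move=> sD sN nN Dx' Nxy Nxy'; rewrite /eqmod.
have -> : ginv (x ** x') ** (y ** y') =
          ginv x' ** (ginv x ** y) ** ginv (ginv x') ** (ginv x' ** y').
  by rewrite ginvgK ginvMg -!gmulA gmulKVg !gmulA.
have Nxy1 := nN _ (ginv x ** y) (subgroupV sD Dx') Nxy.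
exact: (subgroupM sN Nxy1 Nxy').
Qed.

Lemma eqmod_mem D N x y : is_subgroup D -> (forall z, N z -> D z) ->
  D x -> eqmod N x y -> D y.
Proof. by move=> sD ND Dx /ND Dxy; have := subgroupM sD Dx Dxy; rewrite gmulKVg. Qed.

Definition coset_reps S k (r : nat -> Gam) := forall x, exists2 i, i < k & eqmod S (r i) x.

Definition fin_index S := exists k r, coset_reps S k r.

Lemma coset_reps_leq S k k' r : k <= k' -> coset_reps S k r -> coset_reps S k' r.
Proof.
by move=> le_kk' cS x; have [i lt_ik Sx] := cS x; exists i => //; apply: leq_trans le_kk'.
Qed.

Lemma coset_reps_gt0 S k r : coset_reps S k r -> 0 < k.
Proof. by move=> cS; have [i lt_ik _] := cS (gone Gam); apply: leq_ltn_trans lt_ik. Qed.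

Lemma fibres_coset_reps (T : finType) (f : Gam -> T) S :
  (forall x y, f x = f y -> eqmod S x y) -> exists r, coset_reps S #|T| r.
Proof.
move=> fS; pose P i x := f x = nth (f (gone Gam)) (enum T) i.
exists (fun i => epsilon (inhabits (gone Gam)) (P i)) => x.
have Px : P (index (f x) (enum T)) x by rewrite /P nth_index ?mem_enum.
exists (index (f x) (enum T)); first by rewrite cardE index_mem mem_enum.
by apply: fS; rewrite (epsilon_spec _ _ (ex_intro _ x Px)).
Qed.

End Subgroups.

Section Homomorphisms.
Variables (Gam : Grp) (gT : finGroupType) (f : Gam -> gT).
Hypothesis fM : is_hom f.

Lemma hom1 : f (gone Gam) = 1%g.
Proof. by apply: (@mulgI _ (f (gone Gam))); rewrite -fM gmul1 mulg1. Qed.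

Lemma homV x : f (ginv x) = ((f x)^-1)%g.
Proof. by apply: (@mulIg _ (f x)); rewrite -fM gmulV hom1 mulVg. Qed.

Lemma hom_eqmod1 x y : f (ginv x ** y) = 1%g <-> f x = f y.
Proof.
rewrite fM homV; split=> [e | ->]; last exact: mulVg.
by apply/eqP; rewrite eq_mulVg1 e.
Qed.

Lemma preim_subgroup (G : {group gT}) : is_subgroup (fun x => f x \in G).
Proof.
split; first by rewrite hom1 group1.
  by move=> x y Gx Gy; rewrite fM groupM.
by move=> x Gx; rewrite homV groupV.
Qed.

Lemma preim_coset_reps (G : {group gT}) : exists r, coset_reps (fun x => f x \in G) #|gT| r.
Proof.
apply: (@fibres_coset_reps _ _ f (fun x => f x \in G)) => x y /hom_eqmod1 e.
by rewrite /eqmod e group1.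
Qed.

End Homomorphisms.

Section CosetAction.
Variables (Gam : Grp) (S : Gam -> Prop) (k : nat) (r : nat -> Gam).
Hypotheses (sS : is_subgroup S) (cS : coset_reps S k.+1 r).
Implicit Types x y : Gam.

Definition coset_index y : 'I_k.+1 :=
  epsilon (inhabits ord0) (fun i : 'I_k.+1 => eqmod S (r i) y).

Lemma coset_indexP y : eqmod S (r (coset_index y)) y.
Proof.
apply: (epsilon_spec _ (fun i : 'I_k.+1 => eqmod S (r i) y)).
by have [i lt_ik Sy] := cS y; exists (Ordinal lt_ik).
Qed.

Lemma coset_index_eq y y' : eqmod S y y' -> coset_index y = coset_index y'.
Proof.
move=> Syy'; rewrite /coset_index; congr (epsilon _ _).
apply: functional_extensionality => i; apply: propositional_extensionality.
split=> Sy; first exact: eqmod_trans sS Sy Syy'.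
exact: eqmod_trans sS Sy (eqmod_sym sS Syy').
Qed.

Lemma coset_index_eqmod y y' : coset_index y = coset_index y' -> eqmod S y y'.
Proof.
move=> e; have := coset_indexP y'; rewrite -e.
exact: eqmod_trans sS (eqmod_sym sS (coset_indexP y)).
Qed.

Lemma coset_index_rep y : coset_index (r (coset_index y)) = coset_index y.
Proof. exact/coset_index_eq/coset_indexP. Qed.

(* Permutations compose left to right, so [x] acts on cosets by [y S |-> x^-1 y S];
   indices that are not of the form [coset_index _] are fixed. *)
Definition coset_perm_fun x (i : 'I_k.+1) :=
  if coset_index (r i) == i then coset_index (ginv x ** r i) else i.

Lemma coset_perm_fun_inj x : injective (coset_perm_fun x).
Proof.
move=> i j; rewrite /coset_perm_fun.
case: eqP => ri; case: eqP => rj.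
- move/coset_index_eqmod/(eqmodMl x); rewrite !gmulKVg => /coset_index_eq.
  by rewrite ri rj.
- by move=> e; move: rj; rewrite -e coset_index_rep.
- by move=> e; move: ri; rewrite e coset_index_rep.
- by [].
Qed.

Definition coset_perm x : {perm 'I_k.+1} := perm (@coset_perm_fun_inj x).

Lemma coset_perm_hom : is_hom coset_perm.
Proof.
move=> x y; apply/permP => i; rewrite permM !permE /coset_perm_fun.
have [ri|] := eqVneq (coset_index (r i)) i; last by move/negbTE->.
rewrite coset_index_rep eqxx; apply: coset_index_eq.
rewrite ginvMg -gmulA; apply: eqmodMl.
exact: eqmod_sym sS (coset_indexP _).
Qed.

Lemma coset_perm_stab x :
  S x <-> coset_perm x (coset_index (gone Gam)) = coset_index (gone Gam).
Proof.
rewrite permE /coset_perm_fun coset_index_rep eqxx.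
have -> : coset_index (ginv x ** r (coset_index (gone Gam))) = coset_index (ginv x).
  by apply: coset_index_eq; have := eqmodMl (ginv x) (coset_indexP (gone Gam)); rewrite gmulg1.
split=> [Sx | /coset_index_eqmod]; last by rewrite /eqmod ginvgK gmulg1.
by apply: coset_index_eq; rewrite /eqmod ginvgK gmulg1.
Qed.

End CosetAction.

Section FinitelyGenerated.
Variables (Gam : Grp) (n : nat) (s : nat -> Gam).
Hypothesis gen_s : forall x, Defs.generated (fun g => exists2 i, i < n & g = s i) x.

Lemma hom_eq_on_gens (gT : finGroupType) (f g : Gam -> gT) : is_hom f -> is_hom g ->
  (forall i : 'I_n, f (s i) = g (s i)) -> forall x, f x = g x.
Proof.
move=> fM gM fg x.
have fg_sub : is_subgroup (fun x => f x = g x).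
  split; first by rewrite !hom1.
    by move=> a b ea eb; rewrite fM gM ea eb.
  by move=> a ea; rewrite !homV // ea.
apply: (gen_s x fg_sub) => _ [i lt_in ->].
exact: (fg (Ordinal lt_in)).
Qed.

Definition perm_ker_cap (M : nat) (x : Gam) :=
  forall rho : Gam -> {perm 'I_M.+1}, is_hom rho -> rho x = 1%g.

Lemma perm_ker_cap_subgroup M : is_subgroup (perm_ker_cap M).
Proof.
split; first by move=> rho rhoM; rewrite hom1.
    by move=> x y Kx Ky rho rhoM; rewrite rhoM (Kx _ rhoM) (Ky _ rhoM) mulg1.
by move=> x Kx rho rhoM; rewrite homV // (Kx _ rhoM) invg1.
Qed.

(* A homomorphism to a finite group is determined by the images of the
   generators, so [perm_ker_cap M] is the intersection of finitely many kernels. *)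
Lemma perm_ker_cap_fin_index M : fin_index (perm_ker_cap M).
Proof.
pose extends (f : {ffun 'I_n -> {perm 'I_M.+1}}) (rho : Gam -> {perm 'I_M.+1}) :=
  is_hom rho /\ forall i : 'I_n, rho (s i) = f i.
pose hom_of f := epsilon (inhabits (fun _ => 1%g)) (extends f).
suff fibres x y : [ffun f => hom_of f x] = [ffun f => hom_of f y] ->
    eqmod (perm_ker_cap M) x y.
  by have [r cK] := fibres_coset_reps fibres; exact: ex_intro _ _ (ex_intro _ r cK).
move=> /ffunP exy rho rhoM; pose f := [ffun i : 'I_n => rho (s i)].
have [homM homE] : extends f (hom_of f).
  by apply: (epsilon_spec _ (extends f)); exists rho; split=> // i; rewrite ffunE.
have e := hom_eq_on_gens homM rhoM (fun i => etrans (homE i) (ffunE _ _)).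
by apply/(hom_eqmod1 rhoM); rewrite -!e; have := exy f; rewrite !ffunE.
Qed.

Lemma perm_ker_cap_sub M S k r : is_subgroup S -> coset_reps S k r -> k <= M.+1 ->
  forall x, perm_ker_cap M x -> S x.
Proof.
move=> sS cS le_kM x Kx; have cS' := coset_reps_leq le_kM cS.
by apply/(coset_perm_stab sS cS'); rewrite (Kx _ (coset_perm_hom sS cS')) perm1.
Qed.

End FinitelyGenerated.

Section IndexCore.
Variable Gam : Grp.
Implicit Types (D N K : Gam -> Prop) (x y : Gam).

Definition normal_index_le D N k :=
  [/\ is_subgroup N, (forall x, N x -> D x), normal_in D N &
      exists r : nat -> Gam, (forall i, i < k -> D (r i)) /\
        (forall x, D x -> exists2 i, i < k & exists2 n, N n & x = r i ** n)].

Lemma fin_index_normalP D N : fin_index_normal D N <-> exists k, normal_index_le D N k.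
Proof.
split; first by case=> sN ND nN [k [r cN]]; exists k; split=> //; exists r.
by case=> k [sN ND nN [r cN]]; split=> //; exists k, r.
Qed.

Definition index_core D n x := D x /\ forall N, normal_index_le D N n -> N x.

Variable D : Gam -> Prop.
Hypothesis sD : is_subgroup D.

Lemma index_core_sub n x : index_core D n x -> D x.
Proof. by case. Qed.

Lemma index_core_min N n x : normal_index_le D N n -> index_core D n x -> N x.
Proof. by move=> nN [_]; apply. Qed.

Lemma index_core_subgroup n : is_subgroup (index_core D n).
Proof.
split.
- by split=> [|N [sN _ _ _]]; apply: subgroup1.
- move=> x y [Dx Nx] [Dy Ny]; split=> [|N nN]; first exact: (subgroupM sD Dx Dy).
  by case: (nN) => sN _ _ _; exact: (subgroupM sN (Nx _ nN) (Ny _ nN)).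
- move=> x [Dx Nx]; split=> [|N nN]; first exact: (subgroupV sD Dx).
  by case: (nN) => sN _ _ _; exact: (subgroupV sN (Nx _ nN)).
Qed.

Lemma index_core_normal n : normal_in D (index_core D n).
Proof.
move=> x y Dx [Dy Ny]; split=> [|N nN]; last by case: (nN) => _ _ + _; apply=> //; apply: Ny.
exact: (subgroupM sD (subgroupM sD Dx Dy) (subgroupV sD Dx)).
Qed.

Lemma normal_index_le_leq N k k' : k <= k' -> normal_index_le D N k -> normal_index_le D N k'.
Proof.
move=> le_kk' [sN ND nN [r [Dr cN]]]; split=> //.
exists (fun i => if i < k then r i else gone Gam); split.
  by move=> i _; case: ifP => lt_ik; [apply: Dr | apply: subgroup1].
move=> x /cN [i lt_ik Nx]; exists i; first exact: leq_trans le_kk'.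
by rewrite lt_ik.
Qed.

Lemma index_core_leq n m x : n <= m -> index_core D m x -> index_core D n x.
Proof. by move=> le_nm [Dx Nx]; split=> // N /(normal_index_le_leq le_nm); apply: Nx. Qed.

Lemma normal_index_le_coset_reps N c r n :
  coset_reps D c r -> normal_index_le D N n -> exists r', coset_reps N (c * n) r'.
Proof.
move=> cD [sN ND _ [q [_ cN]]].
case: n cN => [|n] cN; first by have [] := cN _ (ND _ (subgroup1 sN)).
exists (fun i => r (i %/ n.+1) ** q (i %% n.+1)) => x.
have [a lt_ac Dx] := cD x; have [b lt_bn [y Ny ey]] := cN _ Dx.
exists (a * n.+1 + b); first by rewrite -ltn_divLR // divnMDl // divn_small // addn0.
rewrite divnMDl // divn_small // addn0 modnMDl modn_small //.
by rewrite /eqmod ginvMg -gmulA ey gmulKg.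
Qed.

(* Each left coset of [K] that meets [D] yields one coset of [index_core D n] in [D]. *)
Lemma index_core_normal_index K n : is_subgroup K -> fin_index K ->
  (forall x, K x -> index_core D n x) -> exists k, normal_index_le D (index_core D n) k.
Proof.
move=> sK [k [r cK]] KD; exists k; split.
- exact: index_core_subgroup.
- exact: index_core_sub.
- exact: index_core_normal.
pose P i z := D z /\ ((exists w, D w /\ eqmod K (r i) w) -> eqmod K (r i) z).
have exP i : exists z, P i z.
  case: (classic (exists w, D w /\ eqmod K (r i) w)) => [[w [Dw Kw]]|noD].
    by exists w.
  by exists (gone Gam); split=> [|/noD]; first exact: subgroup1.
exists (fun i => epsilon (inhabits (gone Gam)) (P i)); split.
  by move=> i _; case: (epsilon_spec (inhabits (gone Gam)) _ (exP i)).
move=> x Dx; have [i lt_ik Kx] := cK x; exists i => //.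
case: (epsilon_spec (inhabits (gone Gam)) _ (exP i)); set z := epsilon _ _ => Dz Kz.
exists (ginv z ** x); last by rewrite gmulKVg.
apply: KD; exact: (eqmod_trans sK (eqmod_sym sK (Kz (ex_intro _ x (conj Dx Kx)))) Kx).
Qed.

End IndexCore.

(* [R] relates the representatives of corresponding cosets under an isomorphism
   [D1 / A1 ~ D2 / A2]; no quotient groups of [Gam] need to be constructed. *)
Record quot_iso (Gam : Grp) (D1 D2 A1 A2 : Gam -> Prop) (R : Gam -> Gam -> Prop) : Prop :=
  QuotIso {
  qi_dom : forall x y, R x y -> D1 x /\ D2 y;
  qi_tot : forall x, D1 x -> exists y, R x y;
  qi_sur : forall y, D2 y -> exists x, R x y;
  qi_eqmodr : forall x y y', R x y -> (R x y' <-> eqmod A2 y y');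
  qi_eqmodl : forall x x' y, R x y -> (R x' y <-> eqmod A1 x x');
  qi_mul : forall x y x' y', R x y -> R x' y' -> R (x ** x') (y ** y')
}.
Arguments qi_dom {Gam D1 D2 A1 A2 R} _ {x y}.
Arguments qi_tot {Gam D1 D2 A1 A2 R} _ {x}.
Arguments qi_sur {Gam D1 D2 A1 A2 R} _ {y}.
Arguments qi_eqmodr {Gam D1 D2 A1 A2 R} _ {x y y'}.
Arguments qi_eqmodl {Gam D1 D2 A1 A2 R} _ {x x' y}.
Arguments qi_mul {Gam D1 D2 A1 A2 R} _ {x y x' y'}.

Section QuotientIsomorphisms.
Variable Gam : Grp.
Implicit Types (D A B N : Gam -> Prop) (R : Gam -> Gam -> Prop) (x y : Gam).

Lemma quot_iso_sym D1 D2 A1 A2 R :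
  quot_iso D1 D2 A1 A2 R -> quot_iso D2 D1 A2 A1 (fun y x => R x y).
Proof.
move=> qR; split.
- by move=> y x /(qi_dom qR) [].
- by move=> y /(qi_sur qR).
- by move=> x /(qi_tot qR).
- by move=> y x x' Rxy; apply: (qi_eqmodl qR Rxy).
- by move=> y y' x Rxy; apply: (qi_eqmodr qR Rxy).
- by move=> y x y' x' Rxy Rxy'; apply: (qi_mul qR).
Qed.

Section Theory.
Variables (D1 D2 A1 A2 : Gam -> Prop) (R : Gam -> Gam -> Prop).
Hypotheses (sD1 : is_subgroup D1) (sA2 : is_subgroup A2).
Hypothesis qR : quot_iso D1 D2 A1 A2 R.

Lemma quot_iso1 : R (gone Gam) (gone Gam).
Proof.
have [u Ru] := qi_tot qR (subgroup1 sD1).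
have := qi_mul qR Ru Ru; rewrite gmul1 => /(qi_eqmodr qR Ru).
rewrite /eqmod gmulKg => /(subgroupV sA2) A2u.
by apply/(qi_eqmodr qR Ru); rewrite /eqmod gmulg1.
Qed.

Lemma quot_isoV x y : R x y -> R (ginv x) (ginv y).
Proof.
move=> Rxy; have [D1x _] := qi_dom qR Rxy.
have [w Rw] := qi_tot qR (subgroupV sD1 D1x).
have := qi_mul qR Rxy Rw; rewrite gmulgV => /(qi_eqmodr qR quot_iso1).
rewrite /eqmod ginvg1 gmul1 => /(subgroupV sA2); rewrite ginvMg => A2w.
exact/(qi_eqmodr qR Rw).
Qed.

Lemma quot_isoVM x y x' y' : R x y -> R x' y' -> R (ginv x ** x') (ginv y ** y').
Proof. by move=> Rxy Rxy'; apply: (qi_mul qR) => //; apply: quot_isoV. Qed.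

Lemma quot_iso_preim_normal N n :
  normal_index_le D2 N n -> normal_index_le D1 (fun x => exists y, R x y /\ N y) n.
Proof.
case=> sN ND2 nN [q [D2q cN]]; split.
- split; first by exists (gone Gam); split; [exact: quot_iso1 | exact: subgroup1].
    move=> a b [ya [Ra Nya]] [yb [Rb Nyb]]; exists (ya ** yb).
    by split; [exact: (qi_mul qR) | exact: (subgroupM sN Nya Nyb)].
  move=> a [ya [Ra Nya]]; exists (ginv ya).
  by split; [exact: quot_isoV | exact: (subgroupV sN Nya)].
- by move=> a [ya [Ra _]]; case: (qi_dom qR Ra).
- move=> d a D1d [ya [Ra Nya]]; have [e Rde] := qi_tot qR D1d.
  exists (e ** ya ** ginv e); split; last by apply: nN => //; case: (qi_dom qR Rde).
  by apply: (qi_mul qR); [apply: (qi_mul qR) | apply: quot_isoV].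
pose Q j x := R x (q j).
have exQ j : j < n -> exists x, Q j x by move=> lt_jn; apply: (qi_sur qR); apply: D2q.
exists (fun j => epsilon (inhabits (gone Gam)) (Q j)); split.
  by move=> j /exQ /(epsilon_spec (inhabits (gone Gam))) /(qi_dom qR) [].
move=> x D1x; have [y Rxy] := qi_tot qR D1x; have [_ D2y] := qi_dom qR Rxy.
have [j lt_jn [t Nt ey]] := cN _ D2y; exists j => //.
have := epsilon_spec (inhabits (gone Gam)) _ (exQ j lt_jn); set pj := epsilon _ _ => Rpj.
exists (ginv pj ** x); last by rewrite gmulKVg.
by exists t; split=> //; have := quot_isoVM Rpj Rxy; rewrite ey gmulKg.
Qed.

Lemma quot_iso_index_core_mem n x y : (forall z, A2 z -> index_core D2 n z) ->
  R x y -> index_core D1 n x -> index_core D2 n y.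
Proof.
move=> A2core Rxy [D1x corex]; have [_ D2y] := qi_dom qR Rxy.
split=> // N nN; have [y' [Rxy' Ny']] := corex _ (quot_iso_preim_normal nN).
have /(qi_eqmodr qR Rxy') /A2core /(index_core_min nN) := Rxy.
case: nN => sN _ _ _ Ny'y.
by have := subgroupM sN Ny' Ny'y; rewrite gmulKVg.
Qed.

End Theory.

Definition coarsen B1 B2 R x y := exists x' y', [/\ R x' y', eqmod B1 x' x & eqmod B2 y' y].

Lemma coarsen_refl B1 B2 R x y : is_subgroup B1 -> is_subgroup B2 ->
  R x y -> coarsen B1 B2 R x y.
Proof. by move=> sB1 sB2 Rxy; exists x, y; split=> //; apply: eqmod_refl. Qed.

Section Coarsen.
Variables (D1 D2 A1 A2 B1 B2 : Gam -> Prop) (R : Gam -> Gam -> Prop).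
Hypotheses (sD1 : is_subgroup D1) (sD2 : is_subgroup D2) (sA2 : is_subgroup A2)
  (sB1 : is_subgroup B1) (sB2 : is_subgroup B2).
Hypotheses (B1D1 : forall x, B1 x -> D1 x) (B2D2 : forall x, B2 x -> D2 x).
Hypotheses (nB1 : normal_in D1 B1) (nB2 : normal_in D2 B2).
Hypothesis qR : quot_iso D1 D2 A1 A2 R.
Hypothesis RB : forall x y, R x y -> (B1 x <-> B2 y).

Lemma quot_iso_coarsen : quot_iso D1 D2 B1 B2 (coarsen B1 B2 R).
Proof.
split.
- move=> x y [x' [y' [Rxy' B1x B2y]]]; have [D1x' D2y'] := qi_dom qR Rxy'.
  by split; [apply: eqmod_mem sD1 B1D1 D1x' B1x | apply: eqmod_mem sD2 B2D2 D2y' B2y].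
- by move=> x /(qi_tot qR) [y Rxy]; exists y; apply: coarsen_refl.
- by move=> y /(qi_sur qR) [x Rxy]; exists x; apply: coarsen_refl.
- move=> x y y' [x1 [y1 [R1 B1x1 B2y1]]]; split=> [[x2 [y2 [R2 B1x2 B2y2]]] | B2yy'].
    have /(RB (quot_isoVM sD1 sA2 qR R1 R2)) B2y12 := eqmod_trans sB1 B1x1 (eqmod_sym sB1 B1x2).
    exact: eqmod_trans sB2 (eqmod_sym sB2 B2y1) (eqmod_trans sB2 B2y12 B2y2).
  by exists x1, y1; split=> //; apply: eqmod_trans sB2 B2y1 B2yy'.
- move=> x x' y [x1 [y1 [R1 B1x1 B2y1]]]; split=> [[x2 [y2 [R2 B1x2 B2y2]]] | B1xx'].
    have /(RB (quot_isoVM sD1 sA2 qR R1 R2)) B1x12 := eqmod_trans sB2 B2y1 (eqmod_sym sB2 B2y2).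
    exact: eqmod_trans sB1 (eqmod_sym sB1 B1x1) (eqmod_trans sB1 B1x12 B1x2).
  by exists x1, y1; split=> //; apply: eqmod_trans sB1 B1x1 B1xx'.
- move=> x y x' y' [x1 [y1 [R1 B1x1 B2y1]]] [x2 [y2 [R2 B1x2 B2y2]]].
  have [D1x2 D2y2] := qi_dom qR R2.
  exists (x1 ** x2), (y1 ** y2); split; first exact: (qi_mul qR).
    exact: eqmodM sD1 sB1 nB1 D1x2 B1x1 B1x2.
  exact: eqmodM sD2 sB2 nB2 D2y2 B2y1 B2y2.
Qed.

End Coarsen.

Lemma quot_iso_index_core D1 D2 A1 A2 R n :
  is_subgroup D1 -> is_subgroup D2 -> is_subgroup A1 -> is_subgroup A2 ->
  (forall x, A1 x -> index_core D1 n x) -> (forall y, A2 y -> index_core D2 n y) ->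
  quot_iso D1 D2 A1 A2 R ->
  quot_iso D1 D2 (index_core D1 n) (index_core D2 n)
    (coarsen (index_core D1 n) (index_core D2 n) R).
Proof.
move=> sD1 sD2 sA1 sA2 A1core A2core qR.
apply: (quot_iso_coarsen sD1 sD2 sA2 _ _ _ _ _ _ qR).
- exact: index_core_subgroup.
- exact: index_core_subgroup.
- exact: index_core_sub.
- exact: index_core_sub.
- exact: index_core_normal.
- exact: index_core_normal.
move=> x y Rxy; split; first exact: (quot_iso_index_core_mem sD1 sA2 qR).
exact: (quot_iso_index_core_mem sD2 sA1 (quot_iso_sym qR)).
Qed.

End QuotientIsomorphisms.

Section Koenig.
Variables (X : Type) (valid : nat -> X -> Prop) (proj : nat -> X -> X).
Hypothesis valid_proj : forall n m x, n <= m -> valid m x -> valid n (proj n x).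
Hypothesis proj_proj : forall n m x, n <= m -> proj n (proj m x) = proj n x.
Hypothesis valid_exists : forall n, exists x, valid n x.
Hypothesis valid_finite :
  forall n, exists k (f : 'I_k -> X), forall x, valid n x -> exists i, f i = x.

Definition extendable n x := valid n x /\ forall m, n <= m -> exists y, valid m y /\ proj n y = x.

(* If no valid point with property [T] were extendable, each would have a level
   beyond which it has no lift; finitely many points give a common such level. *)
Lemma extendable_exists n (T : X -> Prop) :
  (forall m, n <= m -> exists y, valid m y /\ T (proj n y)) ->
  exists x, [/\ valid n x, T x & extendable n x].
Proof.
move=> liftT; apply: NNPP => none.
have stuck x : valid n x -> T x -> exists m, n <= m /\ forall y, valid m y -> proj n y <> x.
  move=> Vx Tx; apply: NNPP => lifts; apply: none; exists x; split=> //; split=> // m le_nm.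
  apply: NNPP => nolift; apply: lifts; exists m; split=> // y Vy e; apply: nolift; by exists y.
pose lv x := epsilon (inhabits 0) (fun m => n <= m /\ forall y, valid m y -> proj n y <> x).
have lvP x : valid n x -> T x -> n <= lv x /\ forall y, valid (lv x) y -> proj n y <> x.
  by move=> Vx Tx; apply: (epsilon_spec (inhabits 0) _ (stuck x Vx Tx)).
have [k [f onto_f]] := valid_finite n; pose M := \max_(i < k) lv (f i).
have le_nM : n <= maxn n M by rewrite leq_maxl.
have [y [Vy Ty]] := liftT _ le_nM.
have Vx : valid n (proj n y) by apply: valid_proj le_nM Vy.
have [le_nlv nolift] := lvP _ Vx Ty.
apply: (nolift (proj (lv (proj n y)) y)); last by rewrite proj_proj.
apply: valid_proj Vy; have [i <-] := onto_f _ Vx.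
by rewrite leq_max leq_bigmax orbT.
Qed.

Lemma extendable_at n : exists x, extendable n x.
Proof.
have [m _|x [_ _ Ex]] := @extendable_exists n (fun _ => True); last by exists x.
by have [y Vy] := valid_exists m; exists y.
Qed.

Lemma extendable_lift n x : extendable n x -> exists x', extendable n.+1 x' /\ proj n x' = x.
Proof.
case=> Vx liftx.
have [m lt_nm|x' [_ e Ex']] := @extendable_exists n.+1 (fun z => proj n z = x); last by exists x'.
have [y [Vy ey]] := liftx m (ltnW lt_nm); exists y; split=> //.
by rewrite proj_proj // leqnSn.
Qed.

Fixpoint extendable_seq n : {x | extendable n x} :=
  if n is n'.+1 then
    let: exist x Ex := extendable_seq n' in
    let: exist x' Ex' := constructive_indefinite_description _ (extendable_lift Ex) in
    exist _ x' (proj1 Ex')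
  else constructive_indefinite_description _ (extendable_at 0).

Lemma koenig : exists s : nat -> X, forall n, valid n (s n) /\ proj n (s n.+1) = s n.
Proof.
exists (fun n => sval (extendable_seq n)) => n; split; first by case: (svalP (extendable_seq n)).
rewrite /=; case: (extendable_seq n) => x Ex /=.
by case: constructive_indefinite_description => x' [].
Qed.

End Koenig.

Section Levels.
Variables (Gam : Grp) (D1 D2 : Gam -> Prop).
Hypotheses (sD1 : is_subgroup D1) (sD2 : is_subgroup D2).
Hypothesis core1_fin : forall n, exists k, normal_index_le D1 (index_core D1 n) k.
Hypothesis core2_fin : forall n, exists k, normal_index_le D2 (index_core D2 n) k.
Implicit Types R : Gam -> Gam -> Prop.

Definition level_iso n R := quot_iso D1 D2 (index_core D1 n) (index_core D2 n) R.
Hypothesis level_iso_exists : forall n, exists R, level_iso n R.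
Definition level_proj n R := coarsen (index_core D1 n) (index_core D2 n) R.

Lemma level_iso_proj n m R : n <= m -> level_iso m R -> level_iso n (level_proj n R).
Proof.
move=> le_nm; apply: quot_iso_index_core => //; try exact: index_core_subgroup.
  by move=> x; apply: index_core_leq.
by move=> y; apply: index_core_leq.
Qed.

Lemma level_proj_proj n m R : n <= m -> level_proj n (level_proj m R) = level_proj n R.
Proof.
move=> le_nm; have sC1 := index_core_subgroup sD1; have sC2 := index_core_subgroup sD2.
apply: functional_extensionality => x; apply: functional_extensionality => y.
apply: propositional_extensionality; split.
  case=> x1 [y1 [[x2 [y2 [R2 C1x2 C2y2]]] C1x1 C2y1]]; exists x2, y2; split=> //.
    by apply: eqmod_trans (sC1 n) _ C1x1; apply: eqmodS C1x2 => z; apply: index_core_leq.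
  by apply: eqmod_trans (sC2 n) _ C2y1; apply: eqmodS C2y2 => z; apply: index_core_leq.
by case=> x1 [y1 [R1 C1x1 C2y1]]; exists x1, y1; split=> //; apply: coarsen_refl.
Qed.

(* A level isomorphism is determined by the images of finitely many coset representatives. *)
Lemma level_iso_finite n :
  exists k (f : 'I_k -> Gam -> Gam -> Prop), forall R, level_iso n R -> exists i, f i = R.
Proof.
have [k1 [_ _ _ [u [D1u cu]]]] := core1_fin n.
have [k2 [_ _ _ [v [D2v cv]]]] := core2_fin n.
have sC2 := index_core_subgroup sD2 n.
case: k2 D2v cv => [|k2] D2v cv; first by case: (cv _ (subgroup1 sD2)).
pose Rof (c : {ffun 'I_k1 -> 'I_k2.+1}) x y := exists i : 'I_k1,
  eqmod (index_core D1 n) (u i) x /\ eqmod (index_core D2 n) (v (c i)) y.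
exists #|{ffun 'I_k1 -> 'I_k2.+1}|, (fun i => Rof (enum_val i)) => R qR.
have imgP (i : 'I_k1) : exists j : 'I_k2.+1, R (u i) (v j).
  have [y Ry] := qi_tot qR (D1u i (ltn_ord i)); have [_ D2y] := qi_dom qR Ry.
  have [j lt_jk [t Ct ey]] := cv _ D2y; exists (Ordinal lt_jk) => /=.
  by apply/(qi_eqmodr qR Ry); rewrite /eqmod ey ginvMg -gmulA gmulV gmulg1; apply: subgroupV.
pose c := [ffun i : 'I_k1 => epsilon (inhabits ord0) (fun j : 'I_k2.+1 => R (u i) (v j))].
have Rc (i : 'I_k1) : R (u i) (v (c i)) by rewrite ffunE; apply: (epsilon_spec _ _ (imgP i)).
exists (enum_rank c); rewrite enum_rankK.
apply: functional_extensionality => x; apply: functional_extensionality => y.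
apply: propositional_extensionality; split=> [[i [C1x C2y]] | Rxy].
  exact/(qi_eqmodr qR ((qi_eqmodl qR (Rc i)).2 C1x)).
have [D1x _] := qi_dom qR Rxy; have [i lt_ik [t Ct ex]] := cu _ D1x.
have C1x : eqmod (index_core D1 n) (u (Ordinal lt_ik)) x by rewrite /eqmod ex gmulKg.
exists (Ordinal lt_ik); split=> //.
exact/(qi_eqmodr qR ((qi_eqmodl qR (Rc _)).2 C1x)).
Qed.

Lemma compatible_levels : exists Rs : nat -> Gam -> Gam -> Prop, forall n,
  level_iso n (Rs n) /\ forall m x y, n <= m -> Rs m x y -> Rs n x y.
Proof.
have [Rs RsP] := koenig level_iso_proj level_proj_proj level_iso_exists level_iso_finite.
exists Rs => n; split=> [|m x y /subnK <-]; first by case: (RsP n).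
elim: (m - n) => // j IH Rxy; apply: IH; rewrite -(proj2 (RsP (j + n))).
by apply: coarsen_refl => //; apply: index_core_subgroup.
Qed.

End Levels.

Section CompletionElements.
Variables (Gam : Grp) (D : Gam -> Prop).
Hypothesis sD : is_subgroup D.
Implicit Types (N : FINS D) (x y z : Gam).

Lemma fins_normal_index N : exists k, normal_index_le D (sval N) k.
Proof. exact/fin_index_normalP/(svalP N). Qed.

Lemma fins_subgroup N : is_subgroup (sval N).
Proof. by have [k []] := fins_normal_index N. Qed.

Lemma fins_sub N x : sval N x -> D x.
Proof. by have [k [_ ND _ _]] := fins_normal_index N; apply: ND. Qed.

Lemma fins_normal N : normal_in D (sval N).
Proof. by have [k []] := fins_normal_index N. Qed.

Lemma fins_index_core N : exists k, forall z, index_core D k z -> sval N z.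
Proof. by have [k nN] := fins_normal_index N; exists k => z; apply: index_core_min. Qed.

Lemma lcoset_eqmod (S : Gam -> Prop) x y : Defs.lcoset S x y <-> eqmod S x y.
Proof.
split; first by case=> n Sn ->; rewrite /eqmod gmulKg.
by move=> Sxy; exists (ginv x ** y); rewrite ?gmulKVg.
Qed.

Variable c : completion D.

Lemma compl_nonempty N : exists x, sval c N x.
Proof.
have [x Dx cx] := proj1 (svalP c) N; exists x; apply/cx/lcoset_eqmod.
exact: eqmod_refl (fins_subgroup N).
Qed.

Lemma compl_eqmod N x : sval c N x -> forall z, sval c N z <-> eqmod (sval N) x z.
Proof.
have [x0 _ cx0] := proj1 (svalP c) N; have sN := fins_subgroup N.
move=> /cx0 /lcoset_eqmod Nx0x z; rewrite cx0 lcoset_eqmod; split=> [Nx0z | Nxz].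
  exact: eqmod_trans sN (eqmod_sym sN Nx0x) Nx0z.
exact: eqmod_trans sN Nx0x Nxz.
Qed.

Lemma compl_mem N x : sval c N x -> D x.
Proof.
have [x0 Dx0 cx0] := proj1 (svalP c) N; move=> /cx0 [n Nn ->].
exact: (subgroupM sD Dx0 (fins_sub Nn)).
Qed.

Lemma compl_compat (M N : FINS D) : (forall y, sval M y -> sval N y) ->
  forall y, sval c M y -> sval c N y.
Proof. exact: (proj2 (svalP c)). Qed.

End CompletionElements.

Lemma compl_ext (Gam : Grp) (D : Gam -> Prop) (c d : completion D) :
  (forall N y, sval c N y <-> sval d N y) -> c = d.
Proof.
case: c d => [c cP] [d dP] /= cd.
have e : c = d.
  apply: functional_extensionality => N; apply: functional_extensionality => y.
  exact: propositional_extensionality.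
by subst d; congr exist; apply: proof_irrelevance.
Qed.

Definition core_fins (Gam : Grp) (D : Gam -> Prop)
  (core_fin : forall n, exists k, normal_index_le D (index_core D n) k) (n : nat) : FINS D :=
  exist _ (index_core D n) ((fin_index_normalP D _).2 (core_fin n)).

Section LimitMap.
Variables (Gam : Grp) (D1 D2 : Gam -> Prop).
Hypotheses (sD1 : is_subgroup D1) (sD2 : is_subgroup D2).
Hypothesis core1_fin : forall n, exists k, normal_index_le D1 (index_core D1 n) k.
Variable Rs : nat -> Gam -> Gam -> Prop.
Hypothesis Rs_iso : forall n, level_iso D1 D2 n (Rs n).
Hypothesis Rs_mono : forall n m x y, n <= m -> Rs m x y -> Rs n x y.
Local Notation C1 := (core_fins core1_fin).

(* The coset of [N2] in the image of [c]: read [c] at a level [n] whose core lies in [N2]. *)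
Definition limit_fun (c : completion D1) (N2 : FINS D2) (y : Gam) :=
  exists n, (forall z, index_core D2 n z -> sval N2 z) /\
    exists x y', [/\ sval c (C1 n) x, Rs n x y' & eqmod (sval N2) y' y].

Lemma limit_funE (c : completion D1) (N2 : FINS D2) n x y :
  (forall z, index_core D2 n z -> sval N2 z) -> sval c (C1 n) x -> Rs n x y ->
  forall z, limit_fun c N2 z <-> eqmod (sval N2) y z.
Proof.
move=> coreN2 cx Rxy z; have sN2 := fins_subgroup N2.
split=> [[n' [coreN2' [x' [y' [cx' Rxy' N2y'z]]]]] | N2yz].
  2: by exists n; split=> //; exists x, y.
pose m := maxn n n'.
have [x'' cx''] := compl_nonempty c (C1 m).
have [y'' Rxy''] := qi_tot (Rs_iso m) (compl_mem sD1 cx'').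
have agree k xk yk : k <= m -> sval c (C1 k) xk -> Rs k xk yk ->
    eqmod (index_core D2 k) yk y''.
  move=> le_km cxk Rk.
  have cx''k : sval c (C1 k) x''.
    by apply: (compl_compat (M := C1 m) (N := C1 k) _ cx'') => w; apply: index_core_leq.
  have /(qi_eqmodl (Rs_iso k) Rk) Rx''yk := (compl_eqmod cxk x'').1 cx''k.
  exact: (qi_eqmodr (Rs_iso k) Rx''yk).1 (Rs_mono le_km Rxy'').
have N2yy'' := eqmodS coreN2 (agree _ _ _ (leq_maxl n n') cx Rxy).
have N2y'y'' := eqmodS coreN2' (agree _ _ _ (leq_maxr n n') cx' Rxy').
exact: eqmod_trans sN2 (eqmod_trans sN2 N2yy'' (eqmod_sym sN2 N2y'y'')) N2y'z.
Qed.

Lemma limit_fun_start (c : completion D1) (N2 : FINS D2) : exists n x y,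
  [/\ forall z, index_core D2 n z -> sval N2 z, sval c (C1 n) x & Rs n x y].
Proof.
have [n coreN2] := fins_index_core N2; have [x cx] := compl_nonempty c (C1 n).
have [y Rxy] := qi_tot (Rs_iso n) (compl_mem sD1 cx).
by exists n, x, y.
Qed.

Lemma limit_fun_elt (c : completion D1) : is_compl_elt (limit_fun c).
Proof.
split=> [N2 | M N MN y [n [coreM [x [y' [cx Rxy' My'y]]]]]].
  have [n [x [y [coreN2 cx Rxy]]]] := limit_fun_start c N2.
  exists y; first by case: (qi_dom (Rs_iso n) Rxy).
  by move=> z; rewrite (limit_funE coreN2 cx Rxy) lcoset_eqmod.
exists n; split=> [z /coreM /MN //|].
by exists x, y'; split=> //; apply: eqmodS MN My'y.
Qed.

Definition limit_map (c : completion D1) : completion D2 := exist _ _ (limit_fun_elt c).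

Lemma limit_mapE (c : completion D1) (N2 : FINS D2) n x y :
  (forall z, index_core D2 n z -> sval N2 z) -> sval c (C1 n) x -> Rs n x y ->
  forall z, sval (limit_map c) N2 z <-> eqmod (sval N2) y z.
Proof. exact: limit_funE. Qed.

Lemma limit_map_prod (c d e : completion D1) :
  compl_prod c d e -> compl_prod (limit_map c) (limit_map d) (limit_map e).
Proof.
move=> cde N2 z; have [n coreN2] := fins_index_core N2; have sN2 := fins_subgroup N2.
have [xc cxc] := compl_nonempty c (C1 n); have [xd dxd] := compl_nonempty d (C1 n).
have [yc Rc] := qi_tot (Rs_iso n) (compl_mem sD1 cxc).
have [yd Rd] := qi_tot (Rs_iso n) (compl_mem sD1 dxd).
have exe : sval e (C1 n) (xc ** xd) by apply/cde; exists xc, xd.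
rewrite (limit_mapE coreN2 exe (qi_mul (Rs_iso n) Rc Rd)); split=> [N2z | [a [b [ca db ->]]]].
  exists yc, (ginv yc ** z); split; last by rewrite gmulKVg.
    by apply/(limit_mapE coreN2 cxc Rc); apply: eqmod_refl.
  by apply/(limit_mapE coreN2 dxd Rd); rewrite /eqmod gmulA -ginvMg.
have [_ D2yd] := qi_dom (Rs_iso n) Rd.
move: ca db => /(limit_mapE coreN2 cxc Rc) N2a /(limit_mapE coreN2 dxd Rd) N2b.
exact: (eqmodM sD2 sN2 (@fins_normal _ _ N2) D2yd N2a N2b).
Qed.

Lemma limit_map_continuous : compl_continuous limit_map.
Proof.
move=> c N2; have [n [x [y [coreN2 cx Rxy]]]] := limit_fun_start c N2.
exists (C1 n) => d dc z; have dx : sval d (C1 n) x by apply/dc.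
by rewrite (limit_mapE coreN2 cx Rxy) (limit_mapE coreN2 dx Rxy).
Qed.

End LimitMap.

Lemma limit_mapK (Gam : Grp) (D1 D2 : Gam -> Prop) (sD1 : is_subgroup D1) (sD2 : is_subgroup D2)
  (core1_fin : forall n, exists k, normal_index_le D1 (index_core D1 n) k)
  (core2_fin : forall n, exists k, normal_index_le D2 (index_core D2 n) k)
  (Rs RsT : nat -> Gam -> Gam -> Prop) (RsT_Rs : forall n x y, RsT n y x <-> Rs n x y)
  (Rs_iso : forall n, level_iso D1 D2 n (Rs n))
  (Rs_mono : forall n m x y, n <= m -> Rs m x y -> Rs n x y)
  (RsT_iso : forall n, level_iso D2 D1 n (RsT n))
  (RsT_mono : forall n m x y, n <= m -> RsT m x y -> RsT n x y) (c : completion D1) :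
  limit_map sD2 core2_fin RsT_iso RsT_mono (limit_map sD1 core1_fin Rs_iso Rs_mono c) = c.
Proof.
apply: compl_ext => N1 z; have [k coreN1] := fins_index_core N1.
have [x cx] := compl_nonempty c (core_fins core1_fin k).
have [y Rxy] := qi_tot (Rs_iso k) (compl_mem sD1 cx).
have fcy : sval (limit_map sD1 core1_fin Rs_iso Rs_mono c) (core_fins core2_fin k) y.
  apply/(limit_mapE sD1 Rs_iso Rs_mono (N2 := core_fins core2_fin k) (fun w Cw => Cw) cx Rxy).
  exact: eqmod_refl (index_core_subgroup sD2 k).
rewrite (limit_mapE sD2 RsT_iso RsT_mono coreN1 fcy ((RsT_Rs _ _ _).2 Rxy)).
by rewrite (compl_eqmod (compl_compat (M := core_fins core1_fin k) coreN1 cx)).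
Qed.

Lemma compl_isomorphic_of_levels (Gam : Grp) (D1 D2 : Gam -> Prop)
  (sD1 : is_subgroup D1) (sD2 : is_subgroup D2)
  (core1_fin : forall n, exists k, normal_index_le D1 (index_core D1 n) k)
  (core2_fin : forall n, exists k, normal_index_le D2 (index_core D2 n) k)
  (Rs : nat -> Gam -> Gam -> Prop) (Rs_iso : forall n, level_iso D1 D2 n (Rs n))
  (Rs_mono : forall n m x y, n <= m -> Rs m x y -> Rs n x y) :
  compl_isomorphic D1 D2.
Proof.
pose RsT n y x := Rs n x y.
have RsT_iso n : level_iso D2 D1 n (RsT n) := quot_iso_sym (Rs_iso n).
have RsT_mono n m x y : n <= m -> RsT m x y -> RsT n x y by apply: Rs_mono.
exists (limit_map sD1 core1_fin Rs_iso Rs_mono), (limit_map sD2 core2_fin RsT_iso RsT_mono).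
split.
- exact: limit_mapK.
- exact: limit_mapK.
- exact: limit_map_prod.
- exact: limit_map_continuous.
- exact: limit_map_continuous.
Qed.

Section Preimages.
Variables (Gam : Grp) (gT : finGroupType) (phi : Gam -> gT).
Hypothesis phiM : is_hom phi.
Variables (n : nat) (s : nat -> Gam).
Hypothesis gen_s : forall x, Defs.generated (fun g => exists2 i, i < n & g = s i) x.
Local Notation preim G := (fun x => phi x \in G).

Lemma perm_ker_cap_index_core (G : {group gT}) k x :
  perm_ker_cap (#|gT| * k.+1) x -> index_core (preim G) k x.
Proof.
move=> Kx; have [r cG] := preim_coset_reps phiM G.
split=> [|N nN].
  apply: (perm_ker_cap_sub (preim_subgroup phiM G) cG _ Kx).
  by rewrite mulnS -addnS leq_addr.
have [r' cN] := normal_index_le_coset_reps cG nN; case: nN => sN _ _ _.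
by apply: (perm_ker_cap_sub sN cN _ Kx); rewrite mulnS leqW // leq_addl.
Qed.

Lemma index_core_preim_normal_index (G : {group gT}) k :
  exists m, normal_index_le (preim G) (index_core (preim G) k) m.
Proof.
apply: (index_core_normal_index (preim_subgroup phiM G) (perm_ker_cap_subgroup _ _)).
  exact: perm_ker_cap_fin_index gen_s _.
exact: perm_ker_cap_index_core.
Qed.

(* [psi] is [x |-> (coset_perm x, phi x)], corestricted to its image. *)
Lemma finite_factorization K : is_subgroup K -> fin_index K ->
  exists (hT : finGroupType) (psi : Gam -> hT) (theta : {morphism [set: hT] >-> gT}),
    [/\ is_hom psi, forall u, exists x, psi x = u, forall x, phi x = theta (psi x)
      & forall x, psi x = 1%g -> K x].
Proof.
move=> sK [k [r cK]]; have := coset_reps_gt0 cK; case: k cK => // k cK _.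
pose rho := coset_perm sK cK; have rhoM : is_hom rho := coset_perm_hom sK cK.
pose psi0 x : ({perm 'I_k.+1} * gT)%type := (rho x, phi x).
have psi0M : is_hom psi0 by move=> x y; rewrite /psi0 rhoM phiM.
pose H := [set h | if excluded_middle_informative (exists x, psi0 x = h) then true else false].
have memH h : h \in H <-> exists x, psi0 x = h.
  by rewrite inE; case: excluded_middle_informative.
have gH : group_set H.
  apply/group_setP; split; first by apply/memH; exists (gone Gam); rewrite hom1.
  by move=> _ _ /memH [x <-] /memH [y <-]; apply/memH; exists (x ** y).
have psi0H x : psi0 x \in H by apply/memH; exists x.
pose psi x : subg_of (Group gH) := subg _ (psi0 x).
have thetaM : {in [set: subg_of (Group gH)] &, {morph (fun u => (sgval u).2) : u v / (u * v)%g}}.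
  by [].
exists _, psi, (Morphism thetaM); split.
- by move=> x y; rewrite /psi psi0M subgM.
- by move=> u; have /memH [x ex] := subgP u; exists x; rewrite /psi ex sgvalK.
- by move=> x; rewrite /= /psi subgK.
move=> x /(congr1 sgval); rewrite /psi subgK // => /(congr1 fst) /= rho1.
by apply/(coset_perm_stab sK cK); rewrite -/rho rho1 perm1.
Qed.

Lemma quot_iso_of_isog (hT : finGroupType) (psi : Gam -> hT)
    (theta : {morphism [set: hT] >-> gT}) (G1 G2 : {group gT}) :
  is_hom psi -> (forall u, exists x, psi x = u) -> (forall x, phi x = theta (psi x)) ->
  (theta @*^-1 G1)%G \isog (theta @*^-1 G2)%G ->
  exists R, quot_iso (preim G1) (preim G2) (fun x => psi x = 1%g) (fun x => psi x = 1%g) R.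
Proof.
move=> psiM psi_onto phiE /isogP [alpha inj_alpha im_alpha].
have mem_preim (G : {group gT}) x : (psi x \in (theta @*^-1 G)%G) = (phi x \in G).
  by rewrite !inE phiE.
exists (fun x y => [/\ phi x \in G1, phi y \in G2 & alpha (psi x) = psi y]); split.
- by move=> x y [].
- move=> x G1x; have [y ey] := psi_onto (alpha (psi x)); exists y; split=> //.
  have G1psix : psi x \in (theta @*^-1 G1)%G by rewrite mem_preim.
  by rewrite -mem_preim ey -im_alpha mem_morphim.
- move=> y G2y; have : psi y \in (alpha @* (theta @*^-1 G1))%g by rewrite im_alpha mem_preim.
  case/morphimP => u _ G1u ->; have [x ex] := psi_onto u.
  by exists x; rewrite -ex -mem_preim ex.
- move=> x y y' [G1x G2y e]; rewrite /eqmod hom_eqmod1 // -e.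
  split=> [[_ _ ->] // | e']; split=> //.
  by rewrite -mem_preim -e' e mem_preim.
- move=> x x' y [G1x G2y e]; rewrite /eqmod hom_eqmod1 //.
  split=> [[G1x' _ e'] | e'']; last by split; rewrite -?e'' // phiE -e'' -phiE.
  by move/injmP: inj_alpha => /(_ (psi x) (psi x')) -> //; rewrite ?mem_preim // e e'.
- move=> x y x' y' [G1x G2y e] [G1x' G2y' e']; split.
  + exact: (subgroupM (preim_subgroup phiM G1) G1x G1x').
  + exact: (subgroupM (preim_subgroup phiM G2) G2y G2y').
  by rewrite !psiM morphM ?mem_preim // e e'.
Qed.

Lemma index_core_level_iso (G1 G2 : {group gT}) :
  (forall (hT : finGroupType) (psi : Gam -> hT) (theta : {morphism [set: hT] >-> gT}),
     is_hom psi -> (forall x, phi x = theta (psi x)) ->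
     (theta @*^-1 G1)%G \isog (theta @*^-1 G2)%G) ->
  forall k, exists R, level_iso (preim G1) (preim G2) k R.
Proof.
move=> isog_all k; pose M := #|gT| * k.+1.
have [hT [psi [theta [psiM psi_onto phiE kerK]]]] :=
  finite_factorization (perm_ker_cap_subgroup Gam M) (perm_ker_cap_fin_index gen_s M).
have [R qR] := quot_iso_of_isog psiM psi_onto phiE (isog_all _ _ _ psiM phiE).
have sker : is_subgroup (fun x => psi x = 1%g).
  by apply: subgroup_ext (preim_subgroup psiM 1%G) => x; rewrite inE; split=> /eqP.
exists (coarsen (index_core (preim G1) k) (index_core (preim G2) k) R).
apply: quot_iso_index_core qR => //; try exact: preim_subgroup.
  by move=> x /kerK; apply: perm_ker_cap_index_core.
by move=> x /kerK; apply: perm_ker_cap_index_core.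
Qed.

End Preimages.

Theorem corollary1p6 (Gam : Grp) (gT : finGroupType) (G1 G2 : {group gT})
    (phi : Gam -> gT) :
  fin_generated Gam ->
  is_hom phi ->
  (forall g : gT, exists x : Gam, phi x = g) ->
  ~ compl_isomorphic (fun x => phi x \in G1) (fun x => phi x \in G2) ->
  exists (hT : finGroupType) (psi : Gam -> hT)
         (theta : {morphism [set: hT] >-> gT}),
    [/\ is_hom psi,
        (forall x, phi x = theta (psi x)) &
        ~ ((theta @*^-1 G1)%G \isog (theta @*^-1 G2)%G)].
Proof.
move=> [n [s gen_s]] phiM _ not_iso; apply: NNPP => no_factor; apply: not_iso.
have isog_all (hT : finGroupType) (psi : Gam -> hT) (theta : {morphism [set: hT] >-> gT}) :
    is_hom psi -> (forall x, phi x = theta (psi x)) ->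
    (theta @*^-1 G1)%G \isog (theta @*^-1 G2)%G.
  move=> psiM phiE; apply: NNPP => not_isog.
  by apply: no_factor; exists hT, psi, theta.
have sD1 := preim_subgroup phiM G1; have sD2 := preim_subgroup phiM G2.
have core1_fin := index_core_preim_normal_index phiM gen_s G1.
have core2_fin := index_core_preim_normal_index phiM gen_s G2.
have [Rs RsP] := compatible_levels sD1 sD2 core1_fin core2_fin
  (index_core_level_iso phiM gen_s isog_all).
exact: (compl_isomorphic_of_levels sD1 sD2 core1_fin core2_fin
  (fun n => (RsP n).1) (fun n m x y => (RsP n).2 m x y)).
Qed.
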